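(* Let $A=\{0,1,2\}$ and let $T\colon A^4\to A$ be given by $T(1,1,2,2)=T(1,2,1,2)=1$ and $T(\mathbf{x})=0$ for all other $\mathbf{x}\in A^4$. Let $f\colon A^2\to A$ be given by $f(x,y)=1$ if $\{x,y\}=\{1,2\}$ and $f(x,y)=0$ otherwise. Then \[\{T\}^{*(2)*(2)}=\langle\{T\}\rangle^{(2)}\ \dot\cup\ \{f\}.\]
   Context: An $m$-ary $g$ commutes with an $n$-ary $h$ if $g\bigl((h((x_{ij})_{j}))_{i}\bigr)=h\bigl((g((x_{ij})_{i}))_{j}\bigr)$ for all $(x_{ij})\in A^{m\times n}$. For a set $F$ of finitary operations on $A$ (positive arity), $F^*$ is the set of all such operations commuting with every member of $F$, and $F^{(n)}$ is the set of $n$-ary members of $F$; superscripts apply from left to right, so $\{T\}^{*(2)*(2)}=(((\{T\}^* )^{(2)})^* )^{(2)}$. $\langle\{T\}\rangle$ is the clone generated by $T$ (all term operations of positive arity, including projections). *)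

From mathcomp Require Import all_boot.
Set Implicit Arguments. Unset Strict Implicit. Unset Printing Implicit Defensive.

Definition A := 'I_3.
Definition a0 : A := @Ordinal 3 0 isT.
Definition a1 : A := @Ordinal 3 1 isT.
Definition a2 : A := @Ordinal 3 2 isT.

Definition op (n : nat) := {ffun {ffun 'I_n -> A} -> A}.

Definition commutes (m n : nat) (g : op m) (h : op n) : Prop :=
  forall x : 'I_m -> 'I_n -> A,
    g [ffun i => h [ffun j => x i j]] = h [ffun j => g [ffun i => x i j]].

Definition Tfun (x : {ffun 'I_4 -> A}) : A :=
  let v k := nat_of_ord (x (inord k)) in
  if [&& v 0 == 1, v 1 == 1, v 2 == 2 & v 3 == 2]
     || [&& v 0 == 1, v 1 == 2, v 2 == 1 & v 3 == 2]
  then a1 else a0.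
Definition T : op 4 := [ffun x => Tfun x].

Definition ffun2 (x : {ffun 'I_2 -> A}) : A :=
  let v k := nat_of_ord (x (inord k)) in
  if ((v 0 == 1) && (v 1 == 2)) || ((v 0 == 2) && (v 1 == 1))
  then a1 else a0.
Definition fop : op 2 := [ffun x => ffun2 x].

Definition TstarB (h : op 2) : Prop := commutes h T.

Definition TstarBstarB (g : op 2) : Prop := forall h : op 2, TstarB h -> commutes g h.

Inductive term (n : nat) : Type :=
| Var : 'I_n -> term n
| AppT : ('I_4 -> term n) -> term n.

Fixpoint eval_term (n : nat) (t : term n) (x : {ffun 'I_n -> A}) : A :=
  match t with
  | Var i => x i
  | AppT ts => T [ffun k => eval_term (ts k) x]
  end.

Definition in_clone (n : nat) (g : op n) : Prop :=
  exists t : term n, g = [ffun x => eval_term t x].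

From mathcomp Require Import all_boot.
Set Implicit Arguments. Unset Strict Implicit. Unset Printing Implicit Defensive.

(* A binary operation commutes with T iff it is a projection or a "spike": it
   vanishes on {0,1}^2 and takes a single nonzero value c.  T and f only take
   the value 1, and only on tuples containing both 1 and 2, so both sides of
   their commutation law with a spike are identically 0: f is in the binary
   bicentralizer, and so is every term operation of T.  Conversely, commuting
   with the spikes that are 1 at (2,0) and 2 at (2,2) already forces a binary
   operation to be f, a projection, 0, T(x,x,y,y) or T(y,y,x,x).  Finally f is
   not a term operation, since T preserves the relation
   {(0,0),(0,1),(1,0),(1,2),(2,1)} and f does not.  The two classifications of
   binary operations are checked by enumerating all 3^9 tables. *)

Definition proj n (i : 'I_n) : op n := [ffun x : {ffun 'I_n -> A} => x i].
Definition term_op n (t : term n) : op n := [ffun x : {ffun 'I_n -> A} => eval_term t x].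

Lemma term_op_AppT n (ts : 'I_4 -> term n) x :
  term_op (AppT ts) x = T [ffun k => term_op (ts k) x].
Proof. by rewrite [LHS]ffunE /=; apply: f_equal; apply/ffunP => k; rewrite !ffunE. Qed.

Lemma proj_commutes m n (i : 'I_m) (h : op n) : commutes (proj i) h.
Proof. by move=> x; rewrite !ffunE; congr (h _); apply/ffunP => j; rewrite !ffunE. Qed.

Lemma commutes_proj m n (g : op m) (i : 'I_n) : commutes g (proj i).
Proof. by move=> x; rewrite !ffunE; congr (g _); apply/ffunP => j; rewrite !ffunE. Qed.

Lemma term_op_commutes m n (t : term n) (h : op m) :
  commutes h T -> commutes (term_op t) h.
Proof.
move=> hT; elim: t => [i | ts IH] x; first exact: proj_commutes.
pose y j k : A := term_op (ts k) [ffun i => x i j].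
transitivity (T [ffun k => h [ffun j => y j k]]).
  by rewrite term_op_AppT; congr (T _); apply/ffunP => k; rewrite !ffunE /y -IH ffunE.
rewrite -(hT y); congr (h _); apply/ffunP => j.
by rewrite [LHS]ffunE [RHS]ffunE term_op_AppT; congr (T _); apply/ffunP => k; rewrite !ffunE.
Qed.

Definition values_in n (B : {pred A}) (g : op n) := forall x, g x \in B.
Definition vanishes_on n (B : {pred A}) (g : op n) :=
  forall x : {ffun 'I_n -> A}, (forall i, x i \in B) -> g x = a0.

Lemma commutes_vanishing m n (B C : {pred A}) (g : op m) (h : op n) :
  values_in B h -> vanishes_on B g -> values_in C g -> vanishes_on C h ->
  commutes g h.
Proof.
move=> hB gB gC hC x.
rewrite gB; last by move=> i; rewrite ffunE.
by rewrite hC // => j; rewrite ffunE.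
Qed.

Definition spike n (c : A) (h : op n) :=
  values_in (pred2 a0 c) h /\ vanishes_on (pred2 a0 a1) h.

Definition detects12 n (g : op n) :=
  forall x : {ffun 'I_n -> A}, g x != a0 -> g x = a1 /\ exists i j, x i = a1 /\ x j = a2.

Lemma detects12_values n (g : op n) : detects12 g -> values_in (pred2 a0 a1) g.
Proof. by move=> gP x; rewrite inE; case: eqP => // /eqP/gP[-> _]. Qed.

Lemma detects12_vanishes n (c : A) (g : op n) : detects12 g -> vanishes_on (pred2 a0 c) g.
Proof.
move=> gP x xc; apply/eqP; apply: contraT => /gP[_ [i [j [xi xj]]]].
by move: (xc i) (xc j); rewrite !inE xi xj => /eqP<- /eqP.
Qed.

Lemma commutes_spike_detects12 m n c (h : op m) (g : op n) :
  spike c h -> detects12 g -> commutes h g /\ commutes g h.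
Proof.
move=> [hc h01] gP.
have g01 := detects12_values gP; have gc := detects12_vanishes (c := c) gP.
by split; apply: commutes_vanishing; eassumption.
Qed.

Definition preserves n (rho : rel A) (g : op n) :=
  forall x y : {ffun 'I_n -> A}, (forall i, rho (x i) (y i)) -> rho (g x) (g y).

Lemma term_op_preserves n rho (t : term n) : preserves rho T -> preserves rho (term_op t).
Proof.
move=> Trho; elim: t => [i | ts IH] x y xy; rewrite !ffunE //=.
by apply: Trho => k; rewrite !ffunE -!(ffunE (fun x => eval_term (ts k) x)); apply: IH.
Qed.

Definition T4 (a b c d : A) : A :=
  let v (x : A) := nat_of_ord x in
  if [&& v a == 1, v b == 1, v c == 2 & v d == 2] || [&& v a == 1, v b == 2, v c == 1 & v d == 2]
  then a1 else a0.

Lemma TE u : T u = T4 (u (inord 0)) (u (inord 1)) (u (inord 2)) (u (inord 3)).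
Proof. by rewrite ffunE. Qed.

Lemma T_neq0 u : T u != a0 -> [/\ T u = a1, u (inord 0) = a1 & u (inord 3) = a2].
Proof.
by rewrite TE /T4; case: ifP => // /orP[] /and4P[x0 _ _ x3]; split=> //; apply/val_inj/eqP.
Qed.

Lemma T_detects12 : detects12 T.
Proof. by move=> x /T_neq0[-> x0 x3]; split=> //; exists (inord 0), (inord 3). Qed.

Lemma in_clone_proj n (i : 'I_n) : in_clone (proj i).
Proof. by exists (Var i). Qed.

Lemma in_clone_T4 n (g0 g1 g2 g3 : op n) :
  in_clone g0 -> in_clone g1 -> in_clone g2 -> in_clone g3 ->
  in_clone [ffun x => T4 (g0 x) (g1 x) (g2 x) (g3 x)].
Proof.
move=> [t0 ->] [t1 ->] [t2 ->] [t3 ->].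
exists (AppT (fun k => nth t0 [:: t0; t1; t2; t3] k)).
by apply/ffunP => x; rewrite !ffunE /= TE !ffunE !inordK.
Qed.

Lemma in_clone_TstarBstarB g : in_clone g -> TstarBstarB g.
Proof. by move=> [t ->] h; apply: term_op_commutes. Qed.

Definition binop (F : A -> A -> A) : op 2 :=
  [ffun u : {ffun 'I_2 -> A} => F (u (inord 0)) (u (inord 1))].

Lemma binopE F u : binop F u = F (u (inord 0)) (u (inord 1)).
Proof. exact: ffunE. Qed.

Lemma binop_proj F : binop F = [ffun x => F (proj (inord 0) x) (proj (inord 1) x)].
Proof. by apply/ffunP => x; rewrite !ffunE. Qed.

Definition f2 (a b : A) : A :=
  if (a == a1) && (b == a2) || (a == a2) && (b == a1) then a1 else a0.

Lemma fop_binop : fop = binop f2.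
Proof. by apply/ffunP => u; rewrite !ffunE. Qed.

Lemma fop_detects12 : detects12 fop.
Proof.
move=> x; rewrite fop_binop binopE /f2.
case: ifP => // /orP[] /andP[/eqP x0 /eqP x1] _; split=> //.
  by exists (inord 0), (inord 1).
by exists (inord 1), (inord 0).
Qed.

(* The pairs (g(1,2), g(2,1)) for g among the binary term operations of T. *)
Definition rho : rel A :=
  [rel a b | (a, b) \in [:: (a0, a0); (a0, a1); (a1, a0); (a1, a2); (a2, a1)]].

Lemma T_preserves_rho : preserves rho T.
Proof.
move=> x y xy.
case: (eqVneq (T x) a0) => [-> | /T_neq0[-> x0 _]];
  case: (eqVneq (T y) a0) => [-> | /T_neq0[-> y0 _]] //.
by have := xy (inord 0); rewrite x0 y0.
Qed.

Definition pair2 (a b : A) : {ffun 'I_2 -> A} := [ffun j : 'I_2 => nth a0 [:: a; b] j].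

Lemma pair2_inord0 a b : pair2 a b (inord 0) = a.
Proof. by rewrite ffunE inordK. Qed.

Lemma pair2_inord1 a b : pair2 a b (inord 1) = b.
Proof. by rewrite ffunE inordK. Qed.

Lemma fop_not_preserves_rho : ~ preserves rho fop.
Proof.
have rho12 i : rho (pair2 a1 a2 i) (pair2 a2 a1 i) by case: i => [[|[|//]] ?]; rewrite !ffunE.
move=> /(_ _ _ rho12).
by rewrite fop_binop !binopE !pair2_inord0 !pair2_inord1.
Qed.

Lemma fop_not_in_clone : ~ in_clone fop.
Proof.
case=> t fE; apply: fop_not_preserves_rho; rewrite fE.
exact: (term_op_preserves t T_preserves_rho).
Qed.

Definition A3 : seq A := [:: a0; a1; a2].

Lemma mem_A3 a : a \in A3.
Proof. by case: a => [[|[|[|//]]] ?]. Qed.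

(* Nested [if]s rather than [&&], so that [vm_compute] short-circuits. *)
Definition allA (P : pred A) : bool := if P a0 then if P a1 then P a2 else false else false.

Lemma allAP (P : pred A) : reflect (forall a, P a) (allA P).
Proof.
rewrite /allA; apply: (iffP idP) => [|Pa]; last by rewrite !Pa.
case: ifP => // P0; case: ifP => // P1 P2 a.
by have := mem_A3 a; rewrite !inE => /or3P[]/eqP->.
Qed.

Definition tab (g : op 2) (a b : A) : A := g (pair2 a b).

Lemma op2E (g : op 2) u : g u = tab g (u (inord 0)) (u (inord 1)).
Proof.
congr (g _); apply/ffunP => -[[|[|//]] j2]; rewrite ffunE /=;
  by congr (u _); apply: val_inj; rewrite /= inordK.
Qed.

Lemma tab_binop F a b : tab (binop F) a b = F a b.
Proof. by rewrite /tab binopE pair2_inord0 pair2_inord1. Qed.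

Definition table (F : A -> A -> A) : seq A := [seq F a b | a <- A3, b <- A3].
Definition lookup (t : seq A) (a b : A) : A := nth a0 t (3 * a + b).
Definition tabl (g : op 2) : seq A := table (tab g).

Lemma lookup_table F a b : lookup (table F) a b = F a b.
Proof.
by have := mem_A3 a; have := mem_A3 b; rewrite !inE => /or3P[]/eqP-> /or3P[]/eqP->.
Qed.

Lemma lookup_tabl g a b : lookup (tabl g) a b = tab g a b.
Proof. exact: lookup_table. Qed.

Lemma tabl_binop F : tabl (binop F) = table F.
Proof. by apply: eq_allpairs => a b; apply: tab_binop. Qed.

Lemma tabl_inj : injective tabl.
Proof.
move=> g h gh; apply/ffunP => u.
by rewrite op2E (op2E h) -!lookup_tabl gh.
Qed.

Definition tables : seq (seq A) :=
  iter 9 (fun ts => [seq a :: t | a <- A3, t <- ts]) [:: [::]].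

Lemma tabl_in_tables g : tabl g \in tables.
Proof.
have : size (tabl g) = 9 by rewrite size_allpairs.
rewrite /tables; move: 9 (tabl g) => n; elim: n => [|n IH] [|a t] // /succn_inj/IH tn.
by rewrite iterS; apply/allpairsP; exists (a, t); rewrite mem_A3.
Qed.

Definition comm_tab (s t : seq A) : bool :=
  allA (fun a => allA (fun b => allA (fun c => allA (fun d =>
    lookup s (lookup t a b) (lookup t c d) == lookup t (lookup s a c) (lookup s b d))))).

Lemma commutes_comm_tab (g h : op 2) : commutes g h -> comm_tab (tabl g) (tabl h).
Proof.
move=> gh; apply/allAP => a; apply/allAP => b; apply/allAP => c; apply/allAP => d.
have := gh (fun i j => nth a0 [:: a; b; c; d] (2 * i + j)).
by rewrite !lookup_table !(op2E, ffunE) !inordK // => ->.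
Qed.

Definition T_test (t m : seq A) : bool :=
  let x k := nth a0 m k in
  lookup t (T4 (x 0) (x 1) (x 2) (x 3)) (T4 (x 4) (x 5) (x 6) (x 7)) ==
  T4 (lookup t (x 0) (x 4)) (lookup t (x 1) (x 5)) (lookup t (x 2) (x 6)) (lookup t (x 3) (x 7)).

Lemma commutes_T_test (h : op 2) m : commutes h T -> T_test (tabl h) m.
Proof.
move/(_ (fun i j => nth a0 m (4 * i + j))).
by rewrite /T_test !lookup_table !(op2E, TE, ffunE) !inordK // => ->.
Qed.

Definition proj_tab (t : seq A) : bool :=
  (t == table (fun a _ => a)) || (t == table (fun _ b => b)).

Definition spike_tab (t : seq A) : bool :=
  has (fun c => allA (fun a => allA (fun b => lookup t a b \in pred2 a0 c))) A3 &&
  allA (fun a => allA (fun b =>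
    (a \in pred2 a0 a1) ==> (b \in pred2 a0 a1) ==> (lookup t a b == a0))).

Lemma proj_tabP h : proj_tab (tabl h) -> exists i, h = proj i.
Proof.
case/orP => /eqP; rewrite -tabl_binop => /tabl_inj->;
  by [exists (inord 0) | exists (inord 1)]; apply/ffunP => u; rewrite !ffunE.
Qed.

Lemma spike_tabP h : spike_tab (tabl h) -> exists c, spike c h.
Proof.
case/andP => /hasP[c _ /allAP hc] /allAP h01; exists c; split => x.
  by rewrite op2E -lookup_tabl; move/allAP: (hc (x (inord 0))).
move=> x01; rewrite op2E -lookup_tabl; apply/eqP.
by move/allAP: (h01 (x (inord 0))) => /(_ (x (inord 1))); rewrite !x01.
Qed.

Definition T_tests : seq (seq A) := [seq [seq nth a0 A3 k | k <- m] | m <- [::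
  [:: 2; 2; 1; 1; 1; 1; 2; 2]; [:: 0; 2; 0; 2; 2; 1; 2; 1]; [:: 1; 1; 1; 1; 1; 2; 1; 2];
  [:: 2; 2; 2; 2; 0; 0; 2; 2]; [:: 1; 0; 1; 0; 2; 2; 2; 2]; [:: 2; 2; 1; 1; 0; 0; 2; 2];
  [:: 2; 0; 2; 0; 2; 2; 2; 2]; [:: 1; 1; 2; 2; 2; 2; 0; 0]; [:: 0; 1; 0; 1; 2; 2; 2; 2];
  [:: 1; 2; 1; 2; 1; 0; 1; 2]; [:: 0; 0; 2; 2; 2; 2; 2; 2]; [:: 2; 2; 2; 2; 1; 0; 1; 0];
  [:: 2; 2; 2; 2; 2; 1; 2; 1]; [:: 1; 1; 2; 2; 1; 2; 1; 2]; [:: 2; 0; 2; 0; 1; 2; 1; 2];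
  [:: 1; 1; 2; 2; 2; 2; 1; 1]; [:: 2; 2; 2; 2; 2; 0; 2; 0]; [:: 1; 1; 2; 2; 2; 2; 2; 2];
  [:: 2; 0; 2; 0; 0; 2; 0; 2]; [:: 0; 0; 2; 2; 2; 2; 0; 0]; [:: 2; 1; 2; 1; 2; 2; 2; 2];
  [:: 2; 2; 2; 2; 0; 0; 1; 1]; [:: 2; 2; 2; 2; 1; 1; 2; 2]]].

Lemma T_tests_classify :
  all (fun t => proj_tab t || spike_tab t) [seq t <- tables | all (T_test t) T_tests].
Proof. by vm_compute. Qed.

Lemma TstarB_binaryP h : TstarB h <-> (exists i, h = proj i) \/ (exists c, spike c h).
Proof.
split=> [hT | [[i ->] | [c hc]]]; last 2 first.
- exact: proj_commutes.
- exact: (commutes_spike_detects12 hc T_detects12).1.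
have : tabl h \in [seq t <- tables | all (T_test t) T_tests].
  by rewrite mem_filter tabl_in_tables andbT; apply/allP => m _; apply: commutes_T_test.
by move/(allP T_tests_classify)/orP => [/proj_tabP | /spike_tabP]; [left | right].
Qed.

Lemma spike_binop_TstarB F : spike_tab (table F) -> TstarB (binop F).
Proof. by rewrite -tabl_binop => /spike_tabP hF; apply/TstarB_binaryP; right. Qed.

Lemma fop_TstarBstarB : TstarBstarB fop.
Proof.
move=> h /TstarB_binaryP[[i ->] | [c hc]]; first exact: commutes_proj.
exact: (commutes_spike_detects12 hc fop_detects12).2.
Qed.

Definition spike20 (a b : A) : A := if (a == a2) && (b == a0) then a1 else a0.
Definition spike22 (a b : A) : A := if (a == a2) && (b == a2) then a2 else a0.

Definition clone2_tables : seq (seq A) :=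
  [seq table F | F <- [:: (fun a _ => a); (fun _ b => b); (fun a _ => T4 a a a a);
                          (fun a b => T4 a a b b); (fun a b => T4 b b a a)]].

Lemma clone2_in_clone g : tabl g \in clone2_tables -> in_clone g.
Proof.
rewrite !inE -!tabl_binop => /or4P[| | | /orP[]] /eqP/tabl_inj->;
  by rewrite binop_proj ?ffunK; try apply: in_clone_T4; apply: in_clone_proj.
Qed.

Lemma bicentralizer_check :
  all (fun t => t \in table f2 :: clone2_tables)
    [seq t <- tables | comm_tab t (table spike20) && comm_tab t (table spike22)].
Proof. by vm_compute. Qed.

Lemma bicentralizer_binary g :
  commutes g (binop spike20) -> commutes g (binop spike22) -> in_clone g \/ g = fop.
Proof.
move=> /commutes_comm_tab g20 /commutes_comm_tab g22.
have : tabl g \in [seq t <- tables | comm_tab t (table spike20) && comm_tab t (table spike22)].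
  by rewrite mem_filter tabl_in_tables -!tabl_binop g20 g22.
move/(allP bicentralizer_check); rewrite in_cons -tabl_binop -fop_binop.
by case/orP => [/eqP/tabl_inj | /clone2_in_clone]; [right | left].
Qed.

Theorem lemma3p10 :
  (forall g : op 2, TstarBstarB g <-> (in_clone g \/ g = fop)) /\ ~ in_clone fop.
Proof.
split=> [g | ]; last exact: fop_not_in_clone.
split=> [gTT | [/in_clone_TstarBstarB // | ->]]; last exact: fop_TstarBstarB.
by apply: bicentralizer_binary; apply: gTT; apply: spike_binop_TstarB; vm_compute.
Qed.
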